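(* (Partial complement.) Let $V_1,V_2$ be disjoint finite vertex sets, $E\subseteq\{\{u,w\}:u\in V_1,w\in V_2\}$, and let $S_1\subseteq V_1$, $S_2\subseteq V_2$ be nonempty subsets. Let $s_1,s_2$ be two additional vertices and consider either of the graphs (a) on $V_1\cup V_2\cup\{s_1,s_2\}$ with edges $E\cup\{\{s_1,s_2\}\}\cup\{\{v,s_2\}:v\in S_1\}\cup\{\{w,s_1\}:w\in S_2\}$, or (b) on $V_1\cup V_2\cup\{s_1,s_2\}$ with edges $E\cup\{\{s_1,s_2\}\}\cup\{\{v,s_1\}:v\in S_1\}\cup\{\{w,s_2\}:w\in S_2\}$. Then the corresponding graph state can be transformed by LOCC (single-qubit Pauli measurements on $s_1$ and $s_2$ followed by outcome-dependent local unitary corrections on the remaining qubits) into the graph state of the graph on $V_1\cup V_2$ whose edge set is obtained from $E$ by complementing exactly the pairs in $S_1\times S_2$, namely $$\big(E\setminus\{\{u,w\}:u\in S_1,w\in S_2\}\big)\;\cup\;\{\{u,w\}:u\in S_1,\ w\in S_2,\ \{u,w\}\notin E\};$$ in particular every inter-link of $E$ incident to a vertex outside $S_1\cup S_2$ is retained unchanged.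
   Context: For a simple graph $G=(V,E)$, the graph state $|G\rangle$ is the $|V|$-qubit state $\prod_{\{a,b\}\in E} CZ_{ab}\,|+\rangle^{\otimes |V|}$, one qubit per vertex. Two QLANs are modeled by disjoint vertex sets $V_1,V_2$; inter-links are edges between $V_1$ and $V_2$. LOCC means local operations on individual qubits together with classical communication. *)

From HB Require Import structures.
From mathcomp Require Import all_boot all_order all_algebra all_field.
Set Implicit Arguments. Unset Strict Implicit. Unset Printing Implicit Defensive.
Import Order.TTheory GRing.Theory Num.Theory.
Local Open Scope ring_scope.

(* Computational basis of the qubits indexed by T: bit strings x : T -> bool.
   A (not necessarily normalized) state is an amplitude function. *)
Definition state (T : finType) := {ffun T -> bool} -> algC.

(* Unnormalized graph state |G> = prod_{e in E} CZ_e |+>^T, with the graph given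
   by its set of edges (2-element subsets of T):
   <x|G> = (-1)^(number of edges both of whose endpoints are 1 in x). *)
Definition gstate (T : finType) (E : {set {set T}}) : state T :=
  fun x => (-1) ^+ #|[set f in E | f \subset [set v | x v]]|.

(* Single-qubit operators as 2x2 matrices indexed by bool (row, column). *)
Definition op1 := bool -> bool -> algC.
Definition id1 : op1 := fun a b => (a == b)%:R.
Definition unitary1 (U : op1) : Prop :=
  forall a b, \sum_(c : bool) (U c a)^* * U c b = (a == b)%:R.

Definition local_apply (T : finType) (U : T -> op1) (psi : state T) : state T :=
  fun x => \sum_(y : {ffun T -> bool}) (\prod_(v : T) U v (x v) (y v)) * psi y.

Inductive pauli := PX | PY | PZ.
Definition pauli_op (P : pauli) : op1 :=
  match P with
  | PX => fun a b => (a != b)%:R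
  | PY => fun a b => (a != b)%:R * (if a then 'i else - 'i)
  | PZ => fun a b => (a == b)%:R * (-1) ^+ a
  end.
(* Projector onto the (-1)^m eigenspace of P: (I + (-1)^m P)/2. *)
Definition proj (P : pauli) (m : bool) : op1 :=
  fun a b => (id1 a b + (-1) ^+ m * pauli_op P a b) / 2%:R.
(* A (unnormalized) eigenvector of P for the eigenvalue (-1)^m. *)
Definition eigvec (P : pauli) (m : bool) : bool -> algC :=
  match P with
  | PX => fun a => if a then (-1) ^+ m else 1
  | PY => fun a => if a then (-1) ^+ m * 'i else 1
  | PZ => fun a => (a == m)%:R
  end.

(* The graph state of G (on qubits T) can be turned by LOCC into the graph state
   of G' on the qubits other than s1, s2, by Pauli measurements of s1 and s2
   followed by outcome-dependent local unitary corrections on the remaining qubits: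
   for every outcome (m1,m2) occurring with nonzero probability, after the
   corrections the global state is (up to a nonzero scalar)
   |eig_{P1,m1}>_{s1} (x) |eig_{P2,m2}>_{s2} (x) |G'>_{T \ {s1,s2}}. *)
Definition pauli_LOCC (T : finType) (G : {set {set T}}) (s1 s2 : T)
    (G' : {set {set T}}) : Prop :=
  exists (P1 P2 : pauli), forall m1 m2 : bool,
    let phi := local_apply (fun v => if v == s1 then proj P1 m1
                                     else if v == s2 then proj P2 m2 else id1)
                           (gstate G) in
    (exists x, phi x != 0) ->
    exists (U : T -> op1) (c : algC),
      [/\ forall v, unitary1 (U v),
          U s1 = id1, U s2 = id1, c != 0 &
          forall x, local_apply U phi x
                    = c * (eigvec P1 m1 (x s1) * eigvec P2 m2 (x s2) * gstate G' x)].

Definition graphA (T : finType) (E : {set {set T}}) (S1 S2 : {set T}) (s1 s2 : T) :=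
  E :|: [set [set s1; s2]] :|: [set [set v; s2] | v in S1] :|: [set [set w; s1] | w in S2].
Definition graphB (T : finType) (E : {set {set T}}) (S1 S2 : {set T}) (s1 s2 : T) :=
  E :|: [set [set s1; s2]] :|: [set [set v; s1] | v in S1] :|: [set [set w; s2] | w in S2].
Definition partial_complement (T : finType) (E : {set {set T}}) (S1 S2 : {set T}) :=
  (E :\: [set [set u; w] | u in S1, w in S2])
    :|: [set [set u; w] | u in S1, w in S2 & [set u; w] \notin E].

From HB Require Import structures.
From mathcomp Require Import all_boot all_order all_algebra all_field.
From mathcomp Require Import ring.
From Stdlib Require Import FunctionalExtensionality.
Set Implicit Arguments. Unset Strict Implicit. Unset Printing Implicit Defensive.
Import Order.TTheory GRing.Theory Num.Theory.
Local Open Scope ring_scope.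

(* In both graphs s1 is adjacent to s2 and to the vertices of one
   set R2, and s2 to the vertices of the other set R1, so with a = parity of x on
   R1 and b = parity of x on R2 the two extra qubits contribute
   (-1)^(b1 b2 + b2 a + b1 b).  Projecting s1, s2 onto X eigenvectors with outcomes
   m1, m2 sums this over b1, b2 and leaves (-1)^((m1 + b)(m2 + a)): the cross term
   (-1)^(a b) is exactly the sign contributed by the complete bipartite graph
   between R1 and R2, i.e. it toggles those edges, and the linear terms
   (-1)^(m1 a + m2 b) are undone by Z corrections on R1 and R2. *)

Section LocalOperators.

Variable T : finType.
Implicit Types (x y : {ffun T -> bool}) (psi : state T).

Lemma ffun_neq_witness x y : x != y -> exists v, x v != y v.
Proof.
move=> ne; apply/existsP; apply: contraNT ne; rewrite negb_exists => /forallP H.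
by apply/eqP/ffunP => v; apply/eqP; have := H v; rewrite negbK.
Qed.

Lemma local_apply_diag (d : T -> bool -> algC) psi x :
  local_apply (fun v a b => (a == b)%:R * d v a) psi x = (\prod_v d v (x v)) * psi x.
Proof.
rewrite /local_apply (bigD1 x) //= [X in _ + X]big1 ?addr0.
  by congr (_ * _); apply: eq_bigr => v _; rewrite eqxx mul1r.
move=> y /ffun_neq_witness[v yxv].
by rewrite (bigD1 v) //= eq_sym (negbTE yxv) !mul0r.
Qed.

Variables s1 s2 : T.

Definition update2 x (b1 b2 : bool) : {ffun T -> bool} :=
  [ffun v => if v == s1 then b1 else if v == s2 then b2 else x v].

Lemma update2_id x b1 b2 v : v != s1 -> v != s2 -> update2 x b1 b2 v = x v.
Proof. by move=> /negbTE v1 /negbTE v2; rewrite ffunE v1 v2. Qed.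

Lemma gstate_update2 (E : {set {set T}}) x (b1 b2 : bool) :
  (forall f, f \in E -> s1 \notin f) -> (forall f, f \in E -> s2 \notin f) ->
  gstate E (update2 x b1 b2) = gstate E x.
Proof.
move=> E1 E2; rewrite /gstate.
suff -> : [set f in E | f \subset [set v | update2 x b1 b2 v]]
    = [set f in E | f \subset [set v | x v]] by [].
apply/setP => f; rewrite !inE.
case fE: (f \in E) => //=.
have upd_f v : v \in f -> update2 x b1 b2 v = x v.
  move=> vf; apply: update2_id; first by apply: contraNneq (E1 f fE) => <-.
  by apply: contraNneq (E2 f fE) => <-.
by apply/subsetP/subsetP => sub v vf; have := sub v vf; rewrite !inE upd_f.
Qed.

Hypothesis s12 : s1 != s2.

Lemma update2_s1 x b1 b2 : update2 x b1 b2 s1 = b1.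
Proof. by rewrite ffunE eqxx. Qed.

Lemma update2_s2 x b1 b2 : update2 x b1 b2 s2 = b2.
Proof. by rewrite ffunE eq_sym (negbTE s12) eqxx. Qed.

Lemma prod_id1_update2 x y :
  \prod_(v | (v != s1) && (v != s2)) id1 (x v) (y v) = (y == update2 x (y s1) (y s2))%:R.
Proof.
case: eqP => [-> | /eqP /ffun_neq_witness[v yv]].
  by apply: big1 => v /andP[v1 v2]; rewrite /id1 update2_id // eqxx.
have v1 : v != s1 by apply: contraNneq yv => ->; rewrite update2_s1.
have v2 : v != s2 by apply: contraNneq yv => ->; rewrite update2_s2.
rewrite (bigD1 v) /= ?v1 ?v2 // /id1 -(update2_id x (y s1) (y s2) v1 v2).
by rewrite eq_sym (negbTE yv) mul0r.
Qed.

Lemma local_apply_two_sites (p1 p2 : op1) psi x :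
  local_apply (fun v => if v == s1 then p1 else if v == s2 then p2 else id1) psi x
  = \sum_(b1 : bool) \sum_(b2 : bool) p1 (x s1) b1 * p2 (x s2) b2 * psi (update2 x b1 b2).
Proof.
have update2_eq y b1 b2 : (y == update2 x b1 b2)
    = [&& y s1 == b1, y s2 == b2 & y == update2 x (y s1) (y s2)].
  apply/idP/idP => [/eqP -> | /and3P[/eqP <- /eqP <- //]].
  by rewrite update2_s1 update2_s2 !eqxx.
transitivity (\sum_(b1 : bool) \sum_(b2 : bool) \sum_y
    (y == update2 x b1 b2)%:R * (p1 (x s1) b1 * p2 (x s2) b2 * psi y)); last first.
  apply: eq_bigr => b1 _; apply: eq_bigr => b2 _.
  rewrite (bigD1 (update2 x b1 b2)) //= eqxx mul1r big1 ?addr0 // => y.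
  by move/negPf ->; rewrite mul0r.
under [RHS]eq_bigr do rewrite exchange_big /=.
rewrite [RHS]exchange_big /=; apply: eq_bigr => y _.
rewrite (bigD1 s1) //= eqxx (bigD1 s2) /=; last by rewrite eq_sym.
rewrite (eq_sym s2 s1) (negbTE s12) eqxx.
rewrite (eq_bigl (fun v => (v != s1) && (v != s2))) => [|v]; last by rewrite andbC.
rewrite (eq_bigr (fun v => id1 (x v) (y v))) => [|v /andP[/negbTE -> /negbTE ->] //].
rewrite prod_id1_update2.
under eq_bigr do under eq_bigr do rewrite update2_eq.
rewrite !big_bool /=.
by case: (y s1); case: (y s2); case: (y == _);
  rewrite /= ?(mul0r, mulr0, mul1r, mulr1, addr0, add0r).
Qed.

End LocalOperators.

Section GraphStateSigns.

Variable T : finType.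
Implicit Types (y : {ffun T -> bool}) (E : {set {set T}}) (S : {set T}).

Definition parity S y := odd #|S :&: [set v | y v]|.

Definition star S (t : T) := [set [set v; t] | v in S].

Definition biclique S1 S2 := [set [set u; w] | u in S1, w in S2].

Lemma disjoint_sep (E F : {set {set T}}) (p : pred {set T}) :
  {in E, forall f, p f} -> {in F, forall f, ~~ p f} -> [disjoint E & F].
Proof.
move=> pE pF; rewrite disjoints_subset; apply/subsetP => f fE.
by rewrite inE; apply: contraL (pE f fE) => /pF.
Qed.

Lemma gstate_setU (E F : {set {set T}}) y :
  [disjoint E & F] -> gstate (E :|: F) y = gstate E y * gstate F y.
Proof.
move=> dEF; rewrite /gstate -exprD.
have -> : [set f in E :|: F | f \subset [set v | y v]]
    = [set f in E | f \subset [set v | y v]] :|: [set f in F | f \subset [set v | y v]].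
  by apply/setP => f; rewrite !inE andb_orl.
rewrite cardsU; suff -> : [set f in E | f \subset [set v | y v]]
    :&: [set f in F | f \subset [set v | y v]] = set0 by rewrite cards0 subn0.
apply/setP => f; rewrite !inE; case fE: (f \in E) => //=.
by rewrite (disjointFr dEF fE) andbF.
Qed.

Lemma gstate_edge (a b : T) y : gstate [set [set a; b]] y = (-1) ^+ (y a && y b).
Proof.
have -> : y a && y b = ([set a; b] \subset [set v | y v]) by rewrite subUset !sub1set !inE.
rewrite /gstate; case: (boolP (_ \subset _)) => h.
  suff -> : [set f in [set [set a; b]] | f \subset [set v | y v]] = [set [set a; b]]
    by rewrite cards1.
  by apply/setP => f; rewrite !inE; case: eqP => // ->.
suff -> : [set f in [set [set a; b]] | f \subset [set v | y v]] = set0 by rewrite cards0.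
by apply/setP => f; rewrite !inE; case: eqP => // ->; rewrite (negbTE h).
Qed.

Lemma star_center S t f : f \in star S t -> t \in f.
Proof. by case/imsetP => v _ ->; rewrite !inE eqxx orbT. Qed.

Lemma star_notin S t z f : f \in star S t -> z \notin S -> z != t -> z \notin f.
Proof.
case/imsetP => v vS -> zS zt.
by rewrite !inE negb_or zt andbT; apply: contraNneq zS => ->.
Qed.

Lemma gstate_star S t y :
  t \notin S -> gstate (star S t) y = (-1) ^+ (y t && parity S y).
Proof.
move=> tS; rewrite /gstate /parity; case yt: (y t) => /=; last first.
  suff -> : [set f in star S t | f \subset [set v | y v]] = set0 by rewrite cards0.
  apply/setP => f; rewrite !inE; apply/negbTE/negP => /andP[/star_center tf].
  by move/subsetP/(_ t tf); rewrite inE yt.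
have -> : [set f in star S t | f \subset [set v | y v]] = star (S :&: [set v | y v]) t.
  apply/setP => f; rewrite inE; apply/andP/imsetP => [[/imsetP[v vS ->]] | [v]].
    by rewrite subUset !sub1set => /andP[vy _]; exists v; rewrite // in_setI vS vy.
  rewrite inE => /andP[vS vy] ->; split; first by apply/imsetP; exists v.
  by rewrite subUset !sub1set vy inE.
rewrite signr_odd card_in_imset // => u w; rewrite !inE => /andP[uS _] /andP[wS _] uw.
have : u \in [set w; t] by rewrite -uw !inE eqxx.
by rewrite !inE => /orP[/eqP // | /eqP ut]; move: tS; rewrite -ut uS.
Qed.

Lemma gstate_biclique S1 S2 y : [disjoint S1 & S2] ->
  gstate (biclique S1 S2) y = (-1) ^+ (parity S1 y && parity S2 y).
Proof.
move=> dS; rewrite /gstate /parity; set X := [set v | y v].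
have -> : [set f in biclique S1 S2 | f \subset X] = biclique (S1 :&: X) (S2 :&: X).
  apply/setP => f; rewrite inE; apply/andP/imset2P => [[/imset2P[u w uS wS ->]] | [u w]].
    rewrite subUset !sub1set => /andP[uX wX].
    by exists u w; rewrite // !in_setI ?uS ?uX ?wS ?wX.
  rewrite !in_setI => /andP[uS uX] /andP[wS wX] ->; split; first by apply/imset2P; exists u w.
  by rewrite subUset !sub1set uX wX.
rewrite /biclique curry_imset2X card_in_imset ?cardsX -?oddM ?signr_odd //.
have neq a b : a \in S1 -> b \in S2 -> (a == b) = false.
  by move=> aS bS; apply/negbTE; apply: contraTneq bS => <-; rewrite (disjointFr dS aS).
move=> [u w] [u' w']; rewrite !inE /= => /andP[/andP[uS _] /andP[wS _]].
move=> /andP[/andP[uS' _] /andP[wS' _]] uw.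
have : u \in [set u'; w'] by rewrite -uw !inE eqxx.
rewrite !inE (neq u w') // orbF => /eqP ->.
have : w \in [set u'; w'] by rewrite -uw !inE eqxx orbT.
by rewrite !inE eq_sym (neq u' w) // => /eqP ->.
Qed.

Lemma gstate_symdiff (E F : {set {set T}}) y :
  gstate ((E :\: F) :|: (F :\: E)) y = gstate E y * gstate F y.
Proof.
have dDI (C D : {set {set T}}) : [disjoint C :\: D & C :&: D].
  by apply: (@disjoint_sep _ _ (fun f => f \notin D)) => f; rewrite !inE => /andP[] // _ ->.
have splitD (C D : {set {set T}}) : C = (C :\: D) :|: (C :&: D).
  by apply/setP => f; rewrite !inE; case: (f \in C); case: (f \in D).
have sqr_gstate (C : {set {set T}}) : gstate C y ^+ 2 = 1.
  by rewrite /gstate -exprM mulnC exprM sqrrN !expr1n.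
transitivity (gstate ((E :\: F) :|: (E :&: F)) y * gstate ((F :\: E) :|: (F :&: E)) y);
  last by rewrite -!splitD.
rewrite !gstate_setU ?dDI //; last first.
  apply: (@disjoint_sep _ _ (fun f => f \notin F)) => f; rewrite !inE.
    by case/andP.
  by case/andP => _ ->.
by rewrite [F :&: E]setIC mulrACA -expr2 sqr_gstate mulr1.
Qed.

Lemma partial_complementE E S1 S2 :
  partial_complement E S1 S2
  = (E :\: biclique S1 S2) :|: (biclique S1 S2 :\: E).
Proof.
rewrite /partial_complement; congr (_ :|: _); apply/setP => f; rewrite !inE.
apply/imset2P/andP => [[u w uS] | [fE /imset2P[u w uS wS fuw]]].
  by rewrite !inE => /andP[wS fE] ->; split => //; apply/imset2P; exists u w.
by exists u w; rewrite // inE wS -fuw.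
Qed.

Lemma gstate_partial_complement E S1 S2 y : [disjoint S1 & S2] ->
  gstate (partial_complement E S1 S2) y
  = gstate E y * (-1) ^+ (parity S1 y && parity S2 y).
Proof. by move=> dS; rewrite partial_complementE gstate_symdiff gstate_biclique. Qed.

Lemma bicliqueC S1 S2 : biclique S2 S1 = biclique S1 S2.
Proof.
by apply/setP => f; apply/imset2P/imset2P => -[u w uS wS ->]; exists w u => //; rewrite setUC.
Qed.

Lemma partial_complementC E S1 S2 :
  partial_complement E S2 S1 = partial_complement E S1 S2.
Proof. by rewrite !partial_complementE bicliqueC. Qed.

Lemma parity_update2 (s1 s2 : T) S y (b1 b2 : bool) : s1 \notin S -> s2 \notin S ->
  parity S (update2 s1 s2 y b1 b2) = parity S y.
Proof.
move=> s1S s2S; rewrite /parity.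
suff -> : S :&: [set v | update2 s1 s2 y b1 b2 v] = S :&: [set v | y v] by [].
apply/setP => v; rewrite !inE; case: (boolP (v \in S)) => //= vS.
by rewrite update2_id //; [apply: contraNneq s1S | apply: contraNneq s2S] => <-.
Qed.

Variables s1 s2 : T.
Variables (E : {set {set T}}) (R1 R2 : {set T}).
Hypotheses (s12 : s1 != s2)
  (E1 : forall f, f \in E -> s1 \notin f) (E2 : forall f, f \in E -> s2 \notin f)
  (s1R1 : s1 \notin R1) (s1R2 : s1 \notin R2) (s2R1 : s2 \notin R1) (s2R2 : s2 \notin R2).

Lemma gstate_star_pair y :
  gstate (E :|: [set [set s1; s2]] :|: star R1 s2 :|: star R2 s1) y
  = gstate E y * (-1) ^+ (y s1 && y s2) * (-1) ^+ (y s2 && parity R1 y)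
    * (-1) ^+ (y s1 && parity R2 y).
Proof.
have s21 : s2 != s1 by rewrite eq_sym.
have edge12 f : f \in [set [set s1; s2]] -> (s1 \in f) && (s2 \in f).
  by move/set1P ->; rewrite !inE !eqxx orbT.
rewrite gstate_setU; last first.
  apply: (@disjoint_sep _ _ (fun f => (s2 \in f) || (s1 \notin f))) => f.
    rewrite !in_setU => /orP[/orP[/E1 -> | /edge12 /andP[_ ->]] | /star_center ->];
      by rewrite ?orbT.
  by move=> fR; rewrite (star_center fR) (negbTE (star_notin fR s2R2 s21)).
rewrite gstate_setU; last first.
  apply: (@disjoint_sep _ _ (fun f => (s1 \in f) || (s2 \notin f))) => f.
    by rewrite in_setU => /orP[/E2 -> | /edge12 /andP[-> _]]; rewrite ?orbT.
  by move=> fR; rewrite (star_center fR) (negbTE (star_notin fR s1R1 s12)).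
rewrite gstate_setU; last first.
  apply: (@disjoint_sep _ _ (fun f => s1 \notin f)) => f; first exact: E1.
  by move/edge12/andP => [-> _].
by rewrite gstate_edge !gstate_star.
Qed.

End GraphStateSigns.

Section XMeasurement.

Lemma unitary_Zphase (k : bool) : unitary1 (fun a b => (a == b)%:R * (-1) ^+ (k && a)).
Proof.
move=> a b; rewrite big_bool /=.
by case: a; case: b; case: k => /=;
  rewrite ?conjC1 ?conjC0 ?rmorph1 ?rmorph0 ?rmorphN1 ?rmorphM /=; ring.
Qed.

(* [proj PX m a b = (-1)^(m (a + b)) / 2] is the rank-one projector onto
   [eigvec PX m]; summing over [b1] forces [b2 = m1 + b], leaving
   (-1)^((m1 + b)(m2 + a)) / 2. *)
Lemma measureXX_amplitude (m1 m2 x1 x2 a b : bool) (g : algC) :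
  (-1) ^+ (m1 && a) * (-1) ^+ (m2 && b) *
  (\sum_(b1 : bool) \sum_(b2 : bool) proj PX m1 x1 b1 * proj PX m2 x2 b2 *
     (g * (-1) ^+ (b1 && b2) * (-1) ^+ (b2 && a) * (-1) ^+ (b1 && b)))
  = (-1) ^+ (m1 && m2) / 2%:R * (eigvec PX m1 x1 * eigvec PX m2 x2 * (g * (-1) ^+ (a && b))).
Proof.
rewrite !big_bool /proj /id1 /=.
have h2 : (2%:R : algC) != 0 by rewrite pnatr_eq0.
by case: m1; case: m2; case: x1; case: x2; case: a; case: b => /=; field.
Qed.

Variable T : finType.

Lemma prod_sign_in (A : {set T}) (m : bool) :
  \prod_v ((-1) ^+ (m && (v \in A)) : algC) = (-1) ^+ (m && odd #|A|).
Proof.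
rewrite (eq_bigr (fun v => if v \in A then (-1) ^+ m else 1)) => [|v _]; last first.
  by case: (v \in A); rewrite ?andbT ?andbF.
rewrite -big_mkcond prodr_const -signr_odd -exprM.
by case: m; rewrite ?mul1n ?mul0n ?signr_odd.
Qed.

Lemma prod_Zphase (R1 R2 : {set T}) (m1 m2 : bool) (x : {ffun T -> bool}) :
  [disjoint R1 & R2] ->
  \prod_v ((-1) ^+ ((if v \in R1 then m1 else if v \in R2 then m2 else false) && x v) : algC)
  = (-1) ^+ (m1 && parity R1 x) * (-1) ^+ (m2 && parity R2 x).
Proof.
move=> dR; rewrite /parity -!prod_sign_in -big_split /=; apply: eq_bigr => v _.
rewrite !inE; case: (boolP (v \in R1)) => vR1 /=.
  by rewrite (disjointFr dR vR1) /= andbF mulr1.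
by case: (v \in R2); rewrite /= ?andbF mul1r.
Qed.

Variables (s1 s2 : T) (E : {set {set T}}) (R1 R2 : {set T}).

Lemma pauli_LOCC_star_pair :
  s1 != s2 -> (forall f, f \in E -> s1 \notin f) -> (forall f, f \in E -> s2 \notin f) ->
  [disjoint R1 & R2] -> s1 \notin R1 :|: R2 -> s2 \notin R1 :|: R2 ->
  pauli_LOCC (E :|: [set [set s1; s2]] :|: star R1 s2 :|: star R2 s1) s1 s2
             (partial_complement E R1 R2).
Proof.
move=> s12 E1 E2 dR; rewrite !in_setU !negb_or => /andP[s1R1 s1R2] /andP[s2R1 s2R2].
exists PX, PX => m1 m2 phi _.
pose phase v := if v \in R1 then m1 else if v \in R2 then m2 else false.
exists (fun v a b => (a == b)%:R * (-1) ^+ (phase v && a)), ((-1) ^+ (m1 && m2) / 2%:R).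
have Zphase_id v : v \notin R1 -> v \notin R2 ->
    (fun a b => (a == b)%:R * (-1) ^+ (phase v && a)) = id1.
  move=> /negbTE vR1 /negbTE vR2; rewrite /phase vR1 vR2.
  by do 2!apply: functional_extensionality => ?; rewrite mulr1.
split=> [v | | | | x]; first exact: unitary_Zphase.
- exact: Zphase_id.
- exact: Zphase_id.
- by rewrite mulf_neq0 ?signr_eq0 // invr_eq0 pnatr_eq0.
rewrite (local_apply_diag (fun v a => (-1) ^+ (phase v && a))) prod_Zphase //.
rewrite /phi local_apply_two_sites // gstate_partial_complement //.
rewrite (eq_bigr (fun b1 => \sum_(b2 : bool) proj PX m1 (x s1) b1 * proj PX m2 (x s2) b2 *
    (gstate E x * (-1) ^+ (b1 && b2) * (-1) ^+ (b2 && parity R1 x)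
     * (-1) ^+ (b1 && parity R2 x)))) => [|b1 _]; first exact: measureXX_amplitude.
apply: eq_bigr => b2 _.
by rewrite gstate_star_pair // gstate_update2 // update2_s1 // update2_s2 // !parity_update2.
Qed.

End XMeasurement.

Theorem mainTheorem3 (T : finType) (V1 V2 S1 S2 : {set T}) (s1 s2 : T)
    (E : {set {set T}}) :
  [disjoint V1 & V2] ->
  s1 != s2 -> s1 \notin V1 :|: V2 -> s2 \notin V1 :|: V2 ->
  V1 :|: V2 :|: [set s1; s2] = [set: T] ->
  E \subset [set [set u; w] | u in V1, w in V2] ->
  S1 \subset V1 -> S2 \subset V2 -> S1 != set0 -> S2 != set0 ->
  pauli_LOCC (graphA E S1 S2 s1 s2) s1 s2 (partial_complement E S1 S2) /\
  pauli_LOCC (graphB E S1 S2 s1 s2) s1 s2 (partial_complement E S1 S2).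
Proof.
move=> dV s12 s1V s2V _ EV SV1 SV2 _ _.
have dS : [disjoint S1 & S2] by apply: disjointWl SV1 (disjointWr SV2 dV).
have avoidE s : s \notin V1 :|: V2 -> forall f, f \in E -> s \notin f.
  move=> sV f /(subsetP EV) /imset2P[u w uV wV ->]; rewrite !inE negb_or.
  by apply/andP; split; apply: contraNneq sV => ->; rewrite inE ?uV ?wV ?orbT.
have avoidS s : s \notin V1 :|: V2 -> s \notin S1 :|: S2.
  by apply: contra; apply/subsetP; apply: setUSS.
have [E1 E2] := (avoidE s1 s1V, avoidE s2 s2V).
split; first exact: pauli_LOCC_star_pair s12 E1 E2 dS (avoidS s1 s1V) (avoidS s2 s2V).
rewrite /graphB setUAC -partial_complementC.
by apply: pauli_LOCC_star_pair s12 E1 E2 _ _ _; rewrite 1?disjoint_sym // setUC; apply: avoidS.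
Qed.
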